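(* Let $d=2^n$, let $|z\rangle\in\mathbb{C}^d$ be a unit vector, let $\mathcal{M}_{C,z}$ be the Clifford POVM generated by $|z\rangle$, and let $W$ be any Pauli operator with $W\neq\mathbb{I}$. Then $$\|\mathcal{M}_{C,z}(W)\|_{\ell_1}=\frac{\|\Xi(|z\rangle\langle z|)\|_{\ell_1}-1}{(d+1)(d-1)}\,\|W\|_1.$$
   Context: $d=2^n$. The Pauli operators $W_1=\mathbb{I},\dots,W_{d^2}$ are all $n$-fold tensor products of $\sigma_0=\mathbb{I},\sigma_1,\sigma_2,\sigma_3$ (single-qubit Pauli matrices); the Pauli group is $\{\pm W_k,\pm iW_k\}$. The Clifford group $\mathrm{C}_n$ is the group of unitaries normalizing the Pauli group. For a unit vector $|z\rangle$, let $\{|x_k\rangle\langle x_k|\}_{k=1}^N$ be the distinct projectors in the orbit $\{U|z\rangle\langle z|U^\dagger:U\in\mathrm{C}_n\}$; $\mathcal{M}_{C,z}$ has POVM elements $\frac dN|x_k\rangle\langle x_k|$ and $\mathcal{M}_{C,z}(X)=(\mathrm{tr}(\frac dN|x_k\rangle\langle x_k|X))_{k=1}^N$. The characteristic function of a Hermitian $\rho$ is $\Xi(\rho)=(\mathrm{tr}(W_k\rho))_{k=1}^{d^2}\in\mathbb{R}^{d^2}$. $\|\cdot\|_{\ell_1}$ is the vector $\ell_1$-norm, $\|\cdot\|_1$ the trace norm. *)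

(* Complex scalars: an arbitrary numClosedFieldType C
   (algebraically closed field with conjugation and order/norm, e.g. the complex numbers). *)
From HB Require Import structures.
From mathcomp Require Import all_boot all_order all_algebra.
Set Implicit Arguments. Unset Strict Implicit. Unset Printing Implicit Defensive.
Import Order.TTheory GRing.Theory Num.Theory.
Local Open Scope ring_scope.

Section Defs.
Variable C : numClosedFieldType.

Definition adjmx m n (A : 'M[C]_(m, n)) : 'M[C]_(n, m) := (map_mx Num.conj A)^T.

(* single-qubit Pauli matrices sigma_0 = I, sigma_1, sigma_2, sigma_3;
   entry (r, c) with rows/columns indexed by bits (false = |0>, true = |1>) *)
Definition sigma (a : 'I_4) (r c : bool) : C :=
  match val a with
  | 0%N => if r == c then 1 else 0
  | 1%N => if r != c then 1 else 0
  | 2%N => if r == c then 0 else (if r then 'i else - 'i)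
  | _ => if r == c then (if r then -1 else 1) else 0
  end.

Definition bitk (k : nat) (i : nat) : bool := odd (i %/ 2 ^ k).

(* n-fold tensor product sigma_{p 0} (x) ... (x) sigma_{p (n-1)}, written entrywise:
   qubit k corresponds to bit k of the basis index of C^(2^n). *)
Definition pauli (n : nat) (p : {ffun 'I_n -> 'I_4}) : 'M[C]_(2 ^ n) :=
  \matrix_(i, j) \prod_(k < n) sigma (p k) (bitk k i) (bitk k j).

Definition pauli_id (n : nat) : {ffun 'I_n -> 'I_4} := [ffun _ => ord0].

Definition in_pauli_group (n : nat) (M : 'M[C]_(2 ^ n)) : Prop :=
  exists (c : C) (p : {ffun 'I_n -> 'I_4}),
    [\/ c = 1, c = -1, c = 'i | c = - 'i] /\ M = c *: pauli p.

Definition unitary (n : nat) (U : 'M[C]_(2 ^ n)) : Prop :=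
  U *m adjmx U = 1%:M.

Definition clifford (n : nat) (U : 'M[C]_(2 ^ n)) : Prop :=
  unitary U /\
  (forall P, in_pauli_group P -> in_pauli_group (U *m P *m adjmx U)) /\
  (forall Q, in_pauli_group Q -> exists P, in_pauli_group P /\ Q = U *m P *m adjmx U).

Definition proj (n : nat) (z : 'cV[C]_(2 ^ n)) : 'M[C]_(2 ^ n) := z *m adjmx z.

Definition clifford_orbit_enum (n : nat) (z : 'cV[C]_(2 ^ n)) (xs : seq 'M[C]_(2 ^ n)) : Prop :=
  uniq xs /\
  forall P, P \in xs <-> exists U, clifford U /\ P = U *m proj z *m adjmx U.

(* l1-norm of the outcome vector M_{C,z}(X) = (tr (d/N |x_k><x_k| X))_k *)
Definition povm_l1 (n : nat) (xs : seq 'M[C]_(2 ^ n)) (X : 'M[C]_(2 ^ n)) : C :=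
  \sum_(P <- xs) `| \tr (((2 ^ n)%:R / (size xs)%:R) *: P *m X) |.

(* l1-norm of the characteristic function Xi(rho) = (tr (W_k rho))_k *)
Definition char_l1 (n : nat) (rho : 'M[C]_(2 ^ n)) : C :=
  \sum_(p : {ffun 'I_n -> 'I_4}) `| \tr (pauli p *m rho) |.

Definition psd m (B : 'M[C]_m) : Prop :=
  forall v : 'cV[C]_m, 0 <= (adjmx v *m B *m v) 0 0.

(* t is the trace norm of A: t = tr |A| with |A| = sqrt(A^dag A) the PSD square root *)
Definition trace_norm_is m (A : 'M[C]_m) (t : C) : Prop :=
  exists B : 'M[C]_m, psd B /\ B *m B = adjmx A *m A /\ t = \tr B.

End Defs.

Arguments pauli {C n} p.
Arguments char_l1 {C n} rho.
Arguments povm_l1 {C n} xs X.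
Arguments proj {C n} z.
Arguments clifford_orbit_enum {C n} z xs.
Arguments trace_norm_is {C m} A t.
Arguments adjmx {C m n} A.

(* Write W(p) = sum over the orbit of |tr(P W_p)|, so that the POVM l1-norm is
   (d/N) W(p).  Conjugating W_p by a Clifford unitary V does not change W,
   because P |-> V^dag P V permutes the orbit; since the Clifford group acts
   transitively (up to phase) on non-identity Pauli strings -- a gate cycling
   X -> Y -> Z on one qubit and CZ on two qubits suffice -- W is constant on
   them.  Summing W over all d^2 strings gives N ||Xi(|z><z|)||_1, as the
   characteristic l1-norm is Clifford invariant, while W(I) = N; hence
   (d^2 - 1) W(p) = N (||Xi||_1 - 1).  Finally ||W_p||_1 = d, because the only
   positive semidefinite square root of W_p^dag W_p = I is I. *)

From Pilot Require Import Defs.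
From HB Require Import structures.
From mathcomp Require Import all_boot all_order all_algebra.
From mathcomp Require Import ring.
Import Order.TTheory GRing.Theory Num.Theory.
Local Open Scope ring_scope.
Set Implicit Arguments. Unset Strict Implicit. Unset Printing Implicit Defensive.

(** * Tensor products of qubit operators *)

Lemma ffun_neqP (T : finType) (U : eqType) (f g : {ffun T -> U}) :
  f != g -> exists k, f k != g k.
Proof.
move=> neq_fg; apply/existsP; apply: contraR neq_fg => /existsPn eq_fg.
by apply/eqP/ffunP => k; apply/eqP/negPn.
Qed.

Lemma bitk0 i : bitk 0 i = odd i.
Proof. by rewrite /bitk expn0 divn1. Qed.

Lemma bitkS k i : bitk k.+1 i = bitk k i./2.
Proof. by rewrite /bitk expnS divnMA divn2. Qed.

Lemma bitk_inj n i j : (i < 2 ^ n)%N -> (j < 2 ^ n)%N ->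
  (forall k, (k < n)%N -> bitk k i = bitk k j) -> i = j.
Proof.
elim: n i j => [|n IH] i j; first by rewrite !ltnS !leqn0 => /eqP-> /eqP->.
rewrite expnS mul2n -!ltn_half_double => ltin ltjn eqij.
have eq_half : i./2 = j./2 by apply: IH => // k ltkn; rewrite -!bitkS eqij.
have eq_odd : odd i = odd j by rewrite -!bitk0 eqij.
by rewrite -(odd_double_half i) -(odd_double_half j) eq_odd eq_half.
Qed.

Section TensorProduct.
Variable R : comPzRingType.

Lemma sum_double N (g : nat -> R) :
  \sum_(0 <= i < N.*2) g i = \sum_(0 <= j < N) (g j.*2 + g j.*2.+1).
Proof.
elim: N => [|N IH]; first by rewrite !big_geq.
by rewrite doubleS !big_nat_recr //= IH addrA.
Qed.

Lemma sum_bits n (f : 'I_n -> bool -> R) :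
  \sum_(i < 2 ^ n) \prod_(k < n) f k (bitk k i)
  = \prod_(k < n) (f k false + f k true).
Proof.
rewrite -(big_mkord xpredT (fun i => \prod_(k < n) f k (bitk k i))).
elim: n f => [|n IH] f; first by rewrite big_nat1 !big_ord0.
rewrite expnS mul2n sum_double big_ord_recl -(IH (fun k => f (lift ord0 k))) mulr_sumr.
apply: eq_bigr => j _; rewrite !big_ord_recl !bitk0 /= odd_double mulrDl.
have bits_half i : i./2 = j -> \prod_(k < n) f (lift ord0 k) (bitk (lift ord0 k) i)
                              = \prod_(k < n) f (lift ord0 k) (bitk k j).
  by move=> <-; apply: eq_bigr => k _; rewrite lift0 bitkS.
by rewrite !bits_half ?doubleK // -uphalfE uphalf_double.
Qed.

(* A qubit operator is a function bool -> bool -> R of (row, column) bits;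
   tensor_mx F acts with F k on bit k of the basis index, as in Defs.pauli. *)
Definition tensor_mx n (F : 'I_n -> bool -> bool -> R) : 'M[R]_(2 ^ n) :=
  \matrix_(i, j) \prod_(k < n) F k (bitk k i) (bitk k j).

Definition qmul (F G : bool -> bool -> R) (r c : bool) :=
  F r false * G false c + F r true * G true c.

Definition qid (r c : bool) : R := (r == c)%:R.

Lemma tensor_mul n (F G : 'I_n -> bool -> bool -> R) :
  tensor_mx F *m tensor_mx G = tensor_mx (fun k => qmul (F k) (G k)).
Proof.
apply/matrixP => i j; rewrite !mxE -(sum_bits (fun k b => F k _ b * G k b _)).
by apply: eq_bigr => l _; rewrite !mxE -big_split.
Qed.

Lemma tensor_trace n (F : 'I_n -> bool -> bool -> R) :
  \tr (tensor_mx F) = \prod_(k < n) (F k false false + F k true true).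
Proof.
rewrite -(sum_bits (fun k b => F k b b)).
by apply: eq_bigr => i _; rewrite mxE.
Qed.

Lemma eq_tensor n (F G : 'I_n -> bool -> bool -> R) :
  (forall k r c, F k r c = G k r c) -> tensor_mx F = tensor_mx G.
Proof. by move=> eqFG; apply/matrixP => i j; rewrite !mxE; apply: eq_bigr. Qed.

Lemma tensor_id n : tensor_mx (fun _ : 'I_n => qid) = 1%:M.
Proof.
apply/matrixP => i j; rewrite !mxE; have [<-|neqij] := eqVneq i j.
  by rewrite big1 // => k _; rewrite /qid eqxx.
have [k neq_bit] : exists k : 'I_n, bitk k i != bitk k j.
  apply/existsP; apply: contraR neqij; rewrite negb_exists => /forallP eq_bit.
  apply/eqP/val_inj/(@bitk_inj n) => [||k ltkn]; rewrite ?ltn_ord //.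
  by apply/eqP; rewrite -[_ == _]negbK (eq_bit (Ordinal ltkn)).
by rewrite (bigD1 k) //= /qid (negbTE neq_bit) mul0r.
Qed.

Lemma qmul1l (F : bool -> bool -> R) r c : qmul qid F r c = F r c.
Proof. by case: r; rewrite /qmul /qid /= mul1r mul0r ?addr0 ?add0r. Qed.

End TensorProduct.

Arguments qid {R} r c.
Arguments sigma {C} a r c.

Ltac pauli_cases a := case: a => [[|[|[|[|?]]]] ?] //=.

Ltac qubit_field C :=
  rewrite ?(rmorphM, rmorphD, rmorphB, rmorphN, rmorph1, rmorph0, fmorphV, rmorph_nat);
  field: (@mulCii C) (@conjCi C).

(** * Pauli strings *)

Section Pauli.
Variable C : numClosedFieldType.
Implicit Types (n : nat) (a : 'I_4) (r c : bool).

Definition qadj (F : bool -> bool -> C) r c := (F c r)^*.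

Lemma tensor_adj n (F : 'I_n -> bool -> bool -> C) :
  adjmx (tensor_mx F) = tensor_mx (fun k => qadj (F k)).
Proof. by apply/matrixP => i j; rewrite !mxE rmorph_prod. Qed.

Lemma sigma0E r c : sigma ord0 r c = qid r c :> C.
Proof. by case: r; case: c. Qed.

Lemma qadj_qid r c : qadj (@qid C) r c = qid r c.
Proof. by rewrite /qadj /qid eq_sym rmorph_nat. Qed.

Lemma qadj_sigma a r c : qadj (sigma a) r c = sigma a r c.
Proof. by pauli_cases a; case: r; case: c; rewrite /qmul /qadj /qid /sigma /=; qubit_field C. Qed.

Lemma qmul_sigma_sqr a r c : qmul (sigma a) (sigma a) r c = qid r c :> C.
Proof. by pauli_cases a; case: r; case: c; rewrite /qmul /qadj /qid /sigma /=; qubit_field C. Qed.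

Lemma sigma_trace a b :
  qmul (sigma a) (sigma b) false false + qmul (sigma a) (sigma b) true true
  = (a == b)%:R * 2 :> C.
Proof. by pauli_cases a; pauli_cases b; rewrite /qmul /qadj /qid /sigma /=; qubit_field C. Qed.

Lemma pauliE n (p : {ffun 'I_n -> 'I_4}) : pauli p = tensor_mx (fun k => @sigma C (p k)).
Proof. by []. Qed.

Lemma pauli_id1 n : pauli (pauli_id n) = 1%:M :> 'M[C]_(2 ^ n).
Proof. by rewrite pauliE -tensor_id; apply: eq_tensor => k r c; rewrite ffunE sigma0E. Qed.

Lemma pauli_adj n (p : {ffun 'I_n -> 'I_4}) : adjmx (pauli p) = pauli p :> 'M[C]_(2 ^ n).
Proof. by rewrite pauliE tensor_adj; apply: eq_tensor => k r c; rewrite qadj_sigma. Qed.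

Lemma pauli_mulmx_self n (p : {ffun 'I_n -> 'I_4}) : pauli p *m pauli p = 1%:M :> 'M[C]_(2 ^ n).
Proof.
by rewrite pauliE tensor_mul -tensor_id; apply: eq_tensor => k r c; rewrite qmul_sigma_sqr.
Qed.

Lemma pauli_trace n (p q : {ffun 'I_n -> 'I_4}) :
  \tr (pauli p *m pauli q) = (if p == q then (2 ^ n)%:R else 0) :> C.
Proof.
rewrite !pauliE tensor_mul tensor_trace; under eq_bigr do rewrite sigma_trace.
have [<-|neq_pq] := eqVneq p q.
  by under eq_bigr do rewrite eqxx mul1r; rewrite prodr_const card_ord natrX.
have [k neq_k] := ffun_neqP neq_pq.
by rewrite (bigD1 k) //= (negbTE neq_k) !mul0r.
Qed.

End Pauli.

(** * The Clifford group *)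

Section Clifford.
Variable C : numClosedFieldType.

Lemma adjmxM m n k (A : 'M[C]_(m, n)) (B : 'M[C]_(n, k)) :
  adjmx (A *m B) = adjmx B *m adjmx A.
Proof. by rewrite /adjmx map_mxM trmx_mul. Qed.

Lemma adjmxK m n (A : 'M[C]_(m, n)) : adjmx (adjmx A) = A.
Proof. by apply/matrixP => i j; rewrite !mxE conjCK. Qed.

Lemma adjmx1 n : adjmx (1%:M : 'M[C]_n) = 1%:M.
Proof. by apply/matrixP => i j; rewrite !mxE rmorph_nat eq_sym. Qed.

Lemma unitary_adj n (U : 'M[C]_(2 ^ n)) : unitary U -> adjmx U *m U = 1%:M.
Proof. exact: mulmx1C. Qed.

Definition pauli_phase (c : C) := [\/ c = 1, c = -1, c = 'i | c = - 'i].

Lemma pauli_phase1 : pauli_phase 1.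
Proof. exact: Or41. Qed.

Lemma pauli_phaseM a b : pauli_phase a -> pauli_phase b -> pauli_phase (a * b).
Proof.
rewrite /pauli_phase => pa pb; case: pa pb => -> [] ->;
  rewrite ?(mul1r, mulr1, mulrNN, mulNr, mulrN, opprK, mulCii);
  by [exact: Or41 | exact: Or42 | exact: Or43 | exact: Or44].
Qed.

Lemma normr_pauli_phase c : pauli_phase c -> `|c| = 1.
Proof. by case=> ->; rewrite ?normrN ?normr1 ?normCi. Qed.

Lemma pauli_phase_neq0 c : pauli_phase c -> c != 0.
Proof. by move/normr_pauli_phase => nc; rewrite -normr_eq0 nc oner_eq0. Qed.

Lemma pauli_phaseV c : pauli_phase c -> pauli_phase c^-1.
Proof.
by case=> ->; rewrite ?invrN ?invr1 ?invCi ?opprK;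
  [exact: Or41 | exact: Or42 | exact: Or44 | exact: Or43].
Qed.

Lemma in_pauli_groupZ n c (M : 'M[C]_(2 ^ n)) :
  pauli_phase c -> in_pauli_group M -> in_pauli_group (c *: M).
Proof.
move=> pc [d [p [pd ->]]]; exists (c * d), p; split; last by rewrite scalerA.
exact: pauli_phaseM.
Qed.

Lemma pauli_in_group n (q : {ffun 'I_n -> 'I_4}) : in_pauli_group (pauli q : 'M[C]_(2 ^ n)).
Proof. by exists 1, q; rewrite scale1r; split => //; exact: pauli_phase1. Qed.

Lemma clifford1 n : clifford (1%:M : 'M[C]_(2 ^ n)).
Proof.
split; first by rewrite /unitary adjmx1 mul1mx.
by rewrite adjmx1; split=> [P|Q] ?; [|exists Q]; rewrite mul1mx mulmx1.
Qed.

Lemma clifford_mul n (U V : 'M[C]_(2 ^ n)) :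
  clifford U -> clifford V -> clifford (U *m V).
Proof.
move=> [uU [U_to U_onto]] [uV [V_to V_onto]]; rewrite /clifford adjmxM; split; [|split].
- by rewrite /unitary adjmxM mulmxA -(mulmxA U) uV mulmx1 uU.
- by move=> P /V_to /U_to; rewrite !mulmxA.
- move=> Q /U_onto [P1 [/V_onto [P2 [gP2 ->]] ->]].
  by exists P2; rewrite !mulmxA.
Qed.

Lemma clifford_adj n (U : 'M[C]_(2 ^ n)) : clifford U -> clifford (adjmx U).
Proof.
move=> [uU [U_to U_onto]]; have uU' := unitary_adj uU.
have conjK P : adjmx U *m (U *m P *m adjmx U) *m U = P.
  by rewrite !mulmxA uU' mul1mx -mulmxA uU' mulmx1.
rewrite /clifford adjmxK; split; [by rewrite /unitary adjmxK | split].
- by move=> P /U_onto [Q [gQ ->]]; rewrite conjK.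
- by move=> Q gQ; exists (U *m Q *m adjmx U); rewrite conjK; split => //; exact: U_to.
Qed.

Lemma mxtrace_unitary_conj n (U A : 'M[C]_(2 ^ n)) :
  unitary U -> \tr (U *m A *m adjmx U) = \tr A.
Proof. by move/unitary_adj=> uU; rewrite mxtrace_mulC mulmxA uU mul1mx. Qed.

Lemma unitary_conjM n (U A B : 'M[C]_(2 ^ n)) : unitary U ->
  (U *m A *m adjmx U) *m (U *m B *m adjmx U) = U *m (A *m B) *m adjmx U.
Proof. by move/unitary_adj=> uU; rewrite !mulmxA -(mulmxA _ (adjmx U)) uU mulmx1. Qed.

(* Meaningful only on the Pauli group (in_pauli_groupP); junk elsewhere. *)
Definition pauli_index n (M : 'M[C]_(2 ^ n)) : {ffun 'I_n -> 'I_4} :=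
  odflt (pauli_id n) [pick q | \tr (M *m pauli q) != 0].

Lemma pauli_indexZ n c (q : {ffun 'I_n -> 'I_4}) : c != 0 -> pauli_index (c *: pauli q) = q.
Proof.
move=> nz_c.
have trE q' : \tr (c *: pauli q *m pauli q') = c * (if q == q' then (2 ^ n)%:R else 0).
  by rewrite -scalemxAl mxtraceZ pauli_trace.
rewrite /pauli_index; case: pickP => [q' | /(_ q)] /=; rewrite trE.
  by have [->|_] := eqVneq q q'; rewrite ?mulr0 ?eqxx.
by rewrite eqxx mulf_neq0 // pnatr_eq0 expn_eq0.
Qed.

Lemma in_pauli_groupP n (M : 'M[C]_(2 ^ n)) :
  in_pauli_group M -> exists2 c, pauli_phase c & M = c *: pauli (pauli_index M).
Proof. by move=> [c [q [pc ->]]]; exists c; rewrite ?pauli_indexZ ?pauli_phase_neq0. Qed.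

(* A unitary mapping Pauli strings into the Pauli group induces a map on
   strings that is injective by trace orthogonality, hence onto; this gives
   the second half of the normalizer condition for free. *)
Section PauliConjugation.
Variables (n : nat) (U : 'M[C]_(2 ^ n)).
Hypotheses (uU : unitary U) (U_to : forall q, in_pauli_group (U *m pauli q *m adjmx U)).

Lemma pauli_index_conj_inj : injective (fun q => pauli_index (U *m pauli q *m adjmx U)).
Proof.
move=> q q' /= eq_idx; have [c pc Uq] := in_pauli_groupP (U_to q).
have [c' pc' Uq'] := in_pauli_groupP (U_to q').
have : \tr (pauli q *m pauli q') != 0 :> C.
  rewrite -(mxtrace_unitary_conj _ uU) -unitary_conjM // Uq Uq' eq_idx.
  rewrite -scalemxAl -scalemxAr mxtraceZ mxtraceZ pauli_trace eqxx.
  rewrite !mulf_neq0 ?(pauli_phase_neq0 pc) ?(pauli_phase_neq0 pc') //.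
  by rewrite pnatr_eq0 expn_eq0.
by rewrite pauli_trace; have [//|_] := eqVneq q q'; rewrite eqxx.
Qed.

Lemma clifford_of_conj : clifford U.
Proof.
split => //; split.
  by move=> P [c [q [pc ->]]]; rewrite -scalemxAr -scalemxAl; exact: in_pauli_groupZ.
move=> Q [c [q [pc ->]]]; have [f_inv _ f_invK] := injF_bij pauli_index_conj_inj.
have [c' pc' /= Up] := in_pauli_groupP (U_to (f_inv q)); rewrite f_invK in Up.
exists ((c / c') *: pauli (f_inv q)); split.
  apply: in_pauli_groupZ; first exact/pauli_phaseM/pauli_phaseV.
  exact: pauli_in_group.
by rewrite -scalemxAr -scalemxAl Up scalerA divfK ?pauli_phase_neq0.
Qed.

End PauliConjugation.

Lemma char_l1_conj n (U rho : 'M[C]_(2 ^ n)) :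
  clifford U -> char_l1 (adjmx U *m rho *m U) = char_l1 rho.
Proof.
case=> uU [U_to _]; have U_to' q := U_to _ (pauli_in_group q).
rewrite /char_l1 [RHS](reindex_inj (pauli_index_conj_inj uU U_to')); apply: eq_bigr => q _.
have [c pc /= Uq] := in_pauli_groupP (U_to' q).
rewrite !mulmxA mxtrace_mulC !mulmxA [in LHS]Uq -scalemxAl mxtraceZ normrM.
by rewrite normr_pauli_phase ?mul1r.
Qed.

End Clifford.

Definition pX : 'I_4 := @Ordinal 4 1 isT.
Definition pY : 'I_4 := @Ordinal 4 2 isT.
Definition pZ : 'I_4 := @Ordinal 4 3 isT.

Definition pauli_upd n (p : {ffun 'I_n -> 'I_4}) (k : 'I_n) (a : 'I_4) : {ffun 'I_n -> 'I_4} :=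
  [ffun m => if m == k then a else p m].

Section PauliUpdate.
Variables (n : nat) (p : {ffun 'I_n -> 'I_4}).

Lemma pauli_upd_at k a : pauli_upd p k a k = a.
Proof. by rewrite ffunE eqxx. Qed.

Lemma pauli_upd_other k a m : m != k -> pauli_upd p k a m = p m.
Proof. by rewrite ffunE => /negbTE->. Qed.

Lemma pauli_upd_id k : pauli_upd p k (p k) = p.
Proof. by apply/ffunP => m; rewrite ffunE; case: eqP => // ->. Qed.

Lemma pauli_upd_upd k a b : pauli_upd (pauli_upd p k a) k b = pauli_upd p k b.
Proof. by apply/ffunP => m; rewrite !ffunE; case: eqP. Qed.

End PauliUpdate.

(** * Two Clifford gates *)

Section Gates.
Variable C : numClosedFieldType.

Definition qubit_gate n (g : bool -> bool -> C) (k : 'I_n) : 'M[C]_(2 ^ n) :=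
  tensor_mx (fun m => if m == k then g else qid).

Lemma qubit_gate_unitary n (g : bool -> bool -> C) (k : 'I_n) :
  (forall r c, qmul g (qadj g) r c = qid r c) -> unitary (qubit_gate g k).
Proof.
move=> ug; rewrite /unitary tensor_adj tensor_mul -tensor_id.
by apply: eq_tensor => m r c; case: eqP => // _; rewrite qmul1l qadj_qid.
Qed.

Lemma qubit_gate_conj n (g : bool -> bool -> C) (k : 'I_n) (p : {ffun 'I_n -> 'I_4}) a :
  (forall r c, qmul (qmul g (sigma (p k))) (qadj g) r c = sigma a r c) ->
  qubit_gate g k *m pauli p *m adjmx (qubit_gate g k) = pauli (pauli_upd p k a).
Proof.
move=> conj_g; rewrite !pauliE tensor_adj !tensor_mul; apply: eq_tensor => m r c.
rewrite ffunE; case: eqP => [->|_]; first exact: conj_g.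
by case: r; case: c; rewrite /qmul /qadj /qid /=; qubit_field C.
Qed.

Lemma clifford_of_pauli_map n (U : 'M[C]_(2 ^ n))
    (f : {ffun 'I_n -> 'I_4} -> {ffun 'I_n -> 'I_4}) :
  unitary U -> (forall p, U *m pauli p *m adjmx U = pauli (f p)) -> clifford U.
Proof. by move=> uU Uf; apply: clifford_of_conj => // p; rewrite Uf; exact: pauli_in_group. Qed.

(* (I - iX - iY - iZ)/2, the rotation by 2pi/3 about the (1,1,1) axis of the
   Bloch sphere; it permutes X -> Y -> Z -> X without phases. *)
Definition cycle_gate (r c : bool) : C :=
  2^-1 * (if r then (if c then 1 + 'i else 1 - 'i) else (if c then - 1 - 'i else 1 - 'i)).

Definition pauli_cycle (a : 'I_4) : 'I_4 :=
  match val a with 1 => pY | 2 => pZ | 3 => pX | _ => a end.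

Lemma pauli_cycle_transitive (x y : 'I_4) : x != ord0 -> y != ord0 ->
  exists m, iter m pauli_cycle x = y.
Proof.
case: x y => [[|[|[|[|?]]]] ?] [[|[|[|[|?]]]] ?] // _ _.
all: by [exists 0; apply: val_inj | exists 1; apply: val_inj | exists 2; apply: val_inj].
Qed.

Lemma cycle_gate_conj a r c :
  qmul (qmul cycle_gate (sigma a)) (qadj cycle_gate) r c = sigma (pauli_cycle a) r c.
Proof.
by pauli_cases a; case: r; case: c; rewrite /qmul /qadj /cycle_gate /sigma /=; qubit_field C.
Qed.

Lemma cycle_gate_unitary n (k : 'I_n) : unitary (qubit_gate cycle_gate k).
Proof.
apply: qubit_gate_unitary => r c.
by case: r; case: c; rewrite /qmul /qadj /cycle_gate /qid /=; qubit_field C.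
Qed.

Lemma cycle_gate_pauli n (k : 'I_n) (p : {ffun 'I_n -> 'I_4}) :
  let U := qubit_gate cycle_gate k in
  U *m pauli p *m adjmx U = pauli (pauli_upd p k (pauli_cycle (p k))).
Proof. exact/qubit_gate_conj/cycle_gate_conj. Qed.

Lemma cycle_gate_clifford n (k : 'I_n) : clifford (qubit_gate cycle_gate k).
Proof. exact: clifford_of_pauli_map (cycle_gate_unitary k) (cycle_gate_pauli k). Qed.

Definition cz_sign (b : bool) : C := if b then -1 else 1.

Definition cz_gate n (a b : 'I_n) : 'M[C]_(2 ^ n) :=
  diag_mx (\row_i cz_sign (bitk a i && bitk b i)).

Lemma cz_gate_adj n (a b : 'I_n) : adjmx (cz_gate a b) = cz_gate a b.
Proof.
apply/matrixP => i j; rewrite !mxE rmorphMn eq_sym.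
by case: eqP => [->|_] //=; rewrite /cz_sign; case: (_ && _); rewrite ?rmorphN rmorph1.
Qed.

Lemma cz_gate_unitary n (a b : 'I_n) : unitary (cz_gate a b).
Proof.
rewrite /unitary cz_gate_adj mulmx_diag; apply/matrixP => i j; rewrite !mxE.
by case: (i == j); rewrite ?mulr0n // /cz_sign; case: (_ && _); rewrite ?mulrNN mulr1.
Qed.

Lemma cz_gate_conj n (a b : 'I_n) (p : {ffun 'I_n -> 'I_4}) x y c : a != b ->
  (forall ia ja ib jb,
     cz_sign (ia && ib) * (sigma (p a) ia ja * sigma (p b) ib jb) * cz_sign (ja && jb)
     = c * (sigma x ia ja * sigma y ib jb)) ->
  cz_gate a b *m pauli p *m adjmx (cz_gate a b) = c *: pauli (pauli_upd (pauli_upd p a x) b y).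
Proof.
move=> neq_ab rule; rewrite cz_gate_adj mul_diag_mx mul_mx_diag; apply/matrixP => i j.
have rest_eq m : (m != a) && (m != b) ->
    sigma (pauli_upd (pauli_upd p a x) b y m) (bitk m i) (bitk m j)
    = sigma (p m) (bitk m i) (bitk m j) :> C.
  by case/andP=> neq_ma neq_mb; rewrite !pauli_upd_other.
rewrite !mxE (bigD1 a) // (bigD1 b) 1?eq_sym //=.
rewrite [in RHS](bigD1 a) // [in RHS](bigD1 b) 1?eq_sym //=.
rewrite (eq_bigr _ rest_eq) pauli_upd_other // !pauli_upd_at.
set rest := \prod_(m | _) _. clearbody rest.
transitivity (cz_sign (bitk a i && bitk b i)
    * (sigma (p a) (bitk a i) (bitk a j) * sigma (p b) (bitk b i) (bitk b j))
    * cz_sign (bitk a j && bitk b j) * rest); first by ring.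
by rewrite rule; ring.
Qed.

Lemma cz_rule x y : exists x' y' c, pauli_phase c /\ forall ia ja ib jb,
  cz_sign (ia && ib) * (sigma x ia ja * sigma y ib jb) * cz_sign (ja && jb)
  = c * (sigma x' ia ja * sigma y' ib jb).
Proof.
(* CZ fixes Z (x) I and I (x) Z and maps X (x) I to X (x) Z and I (x) X to Z (x) X;
   the other rows follow multiplicatively. *)
pauli_cases x; pauli_cases y.
all: [> exists ord0, ord0, 1 | exists pZ, pX, 1 | exists pZ, pY, 1 | exists ord0, pZ, 1
      | exists pX, pZ, 1 | exists pY, pY, 1 | exists pY, pX, (-1) | exists pX, ord0, 1
      | exists pY, pZ, 1 | exists pX, pY, (-1) | exists pX, pX, 1 | exists pY, ord0, 1
      | exists pZ, ord0, 1 | exists ord0, pX, 1 | exists ord0, pY, 1 | exists pZ, pZ, 1 ].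
all: split; first by [exact: Or41 | exact: Or42].
all: by do 4 case; rewrite /cz_sign /sigma /=; qubit_field C.
Qed.

Lemma cz_gate_clifford n (a b : 'I_n) : a != b -> clifford (cz_gate a b).
Proof.
move=> neq_ab; apply: clifford_of_conj (cz_gate_unitary a b) _ => p.
have [x [y [c [pc rule]]]] := cz_rule (p a) (p b).
by rewrite (cz_gate_conj neq_ab rule); exact/in_pauli_groupZ/pauli_in_group.
Qed.

Lemma cz_gate_X n (a b : 'I_n) (p : {ffun 'I_n -> 'I_4}) : a != b -> p a = pX -> p b = ord0 ->
  cz_gate a b *m pauli p *m adjmx (cz_gate a b) = pauli (pauli_upd p b pZ).
Proof.
move=> neq_ab pa pb; rewrite -{2}(pauli_upd_id p a) pa -[RHS]scale1r.
apply: cz_gate_conj neq_ab _ => ia ja ib jb; rewrite pa pb.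
by case: ia; case: ja; case: ib; case: jb; rewrite /cz_sign /sigma /=; qubit_field C.
Qed.

End Gates.

(** * Weights of Pauli strings on the orbit *)

Section Orbit.
Variables (C : numClosedFieldType) (n : nat) (z : 'cV[C]_(2 ^ n)) (xs : seq 'M[C]_(2 ^ n)).
Hypothesis orbit_xs : clifford_orbit_enum z xs.
Implicit Types (V : 'M[C]_(2 ^ n)) (p q : {ffun 'I_n -> 'I_4}) (a b k : 'I_n) (c : C).

Definition orbit_weight (p : {ffun 'I_n -> 'I_4}) : C :=
  \sum_(P <- xs) `|\tr (P *m pauli p)|.

Local Notation W := orbit_weight.

Lemma orbit_conj_perm V : clifford V -> perm_eq [seq adjmx V *m P *m V | P <- xs] xs.
Proof.
move=> cV; have [uV _] := cV; have uV' := unitary_adj uV.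
have [uniq_xs mem_xs] := orbit_xs.
have conjK P : V *m (adjmx V *m P *m V) *m adjmx V = P.
  by rewrite !mulmxA uV mul1mx -mulmxA uV mulmx1.
have conj_inj := @can_inj _ _ _ (fun M => V *m M *m adjmx V) conjK.
apply: uniq_perm; rewrite ?(map_inj_uniq conj_inj) // => P; apply/mapP/idP.
  case=> Q /mem_xs [U [cU ->]] ->; apply/mem_xs; exists (adjmx V *m U).
  by rewrite adjmxM adjmxK !mulmxA; split; first exact: clifford_mul (clifford_adj cV) cU.
move=> /[dup] /mem_xs [U [cU PE]] xsP; exists (V *m P *m adjmx V); last first.
  by rewrite !mulmxA uV' mul1mx -mulmxA uV' mulmx1.
by apply/mem_xs; exists (V *m U); rewrite PE adjmxM !mulmxA; split; first exact: clifford_mul.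
Qed.

Lemma orbit_weight_conj V p q c : clifford V -> pauli_phase c ->
  V *m pauli p *m adjmx V = c *: pauli q -> W q = W p.
Proof.
move=> cV pc Vp; rewrite /W -[RHS](perm_big _ (orbit_conj_perm cV)) big_map.
have -> : pauli q = c^-1 *: (V *m pauli p *m adjmx V).
  by rewrite Vp scalerA mulVf ?scale1r ?pauli_phase_neq0.
apply: eq_bigr => P _; rewrite -scalemxAr mxtraceZ normrM (normr_pauli_phase (pauli_phaseV pc)).
by rewrite mul1r !mulmxA mxtrace_mulC !mulmxA.
Qed.

Lemma orbit_weight_cycle k p : W (pauli_upd p k (pauli_cycle (p k))) = W p.
Proof.
apply: orbit_weight_conj (cycle_gate_clifford C k) (pauli_phase1 C) _.
by rewrite scale1r; exact: cycle_gate_pauli.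
Qed.

Lemma orbit_weight_local k p x : p k != ord0 -> x != ord0 -> W (pauli_upd p k x) = W p.
Proof.
move=> pk x0; have [m <-] := pauli_cycle_transitive pk x0.
elim: m => [|m IH] /=; first by rewrite pauli_upd_id.
by rewrite -IH -[RHS](orbit_weight_cycle k) pauli_upd_upd pauli_upd_at.
Qed.

Lemma orbit_weight_cz a b p : a != b -> p a = pX -> p b = ord0 ->
  W (pauli_upd p b pZ) = W p.
Proof.
move=> neq_ab pa pb; apply: orbit_weight_conj (cz_gate_clifford C neq_ab) (pauli_phase1 C) _.
by rewrite scale1r; exact: cz_gate_X.
Qed.

Lemma orbit_weight_drop a b p : a != b -> p a = pX -> W (pauli_upd p b ord0) = W p.
Proof.
move=> neq_ab pa; have [<-|pb] := eqVneq (p b) ord0; first by rewrite pauli_upd_id.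
rewrite -(orbit_weight_local pb (isT : pZ != ord0)) -(pauli_upd_upd p b ord0 pZ).
by rewrite (orbit_weight_cz neq_ab) ?pauli_upd_at ?pauli_upd_other.
Qed.

Definition pauli_single a (x : 'I_4) := pauli_upd (pauli_id n) a x.

Lemma orbit_weight_single a p : p a = pX -> W p = W (pauli_single a pX).
Proof.
pose drop := foldl (fun q b => pauli_upd q b ord0).
have drop_weight bs q : a \notin bs -> q a = pX -> W (drop q bs) = W q.
  elim: bs q => [|b bs IH] q //=; rewrite inE negb_or => /andP[neq_ab abs] qa.
  by rewrite IH ?pauli_upd_other // (orbit_weight_drop neq_ab qa).
have dropE bs q m : drop q bs m = if m \in bs then ord0 else q m.
  elim: bs q => [|b bs IH] q //=; rewrite IH inE /pauli_upd ffunE.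
  by case: (m == b); case: (m \in bs).
move=> pa; rewrite -(drop_weight (enum (predC1 a)) p) ?mem_enum ?inE ?eqxx //.
congr W; apply/ffunP => m; rewrite dropE mem_enum inE /pauli_single /pauli_upd !ffunE.
by case: eqP => [->|].
Qed.

Lemma orbit_weight_nonid p q : p != pauli_id n -> q != pauli_id n -> W p = W q.
Proof.
suff single_eq a b : W (pauli_single a pX) = W (pauli_single b pX).
  have to_single r : r != pauli_id n -> exists a, W r = W (pauli_single a pX).
    move=> /ffun_neqP [a]; rewrite ffunE => ra; exists a.
    rewrite -(orbit_weight_local ra (isT : pX != ord0)).
    by apply: orbit_weight_single; rewrite pauli_upd_at.
  by move=> /to_single [a ->] /to_single [b ->].
have [<-//|neq_ab] := eqVneq a b.
have ab_id : pauli_single a pX b = ord0.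
  by rewrite pauli_upd_other 1?eq_sym // ffunE.
rewrite -(orbit_weight_cz neq_ab _ ab_id) ?pauli_upd_at //.
rewrite -(orbit_weight_local (k := b) _ (isT : pX != ord0)) ?pauli_upd_at //.
by rewrite pauli_upd_upd; apply: orbit_weight_single; rewrite pauli_upd_at.
Qed.

Lemma povm_l1_pauli p :
  povm_l1 xs (pauli p) = (2 ^ n)%:R / (size xs)%:R * W p.
Proof.
rewrite /povm_l1 /W mulr_sumr; apply: eq_bigr => P _.
by rewrite -scalemxAl mxtraceZ normrM ger0_norm // divr_ge0 ?ler0n.
Qed.

Hypothesis z_unit : (adjmx z *m z) 0 0 = 1.

Lemma orbit_mem_trace P : P \in xs -> \tr P = 1.
Proof.
have [_ mem_xs] := orbit_xs; case/mem_xs=> U [[uU _] ->].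
by rewrite mxtrace_unitary_conj // /proj mxtrace_mulC /mxtrace big_ord1.
Qed.

Lemma orbit_mem_char P : P \in xs -> char_l1 P = char_l1 (proj z).
Proof.
have [_ mem_xs] := orbit_xs; case/mem_xs=> U [cU ->].
by rewrite -{1}(adjmxK U) char_l1_conj //; exact: clifford_adj.
Qed.

Lemma orbit_size_neq0 : (size xs)%:R != 0 :> C.
Proof.
have [_ mem_xs] := orbit_xs; have : proj z \in xs.
  by apply/mem_xs; exists 1%:M; rewrite mul1mx adjmx1 mulmx1; split; first exact: clifford1.
by rewrite pnatr_eq0 size_eq0; apply: contraTneq => ->.
Qed.

Lemma orbit_weight_id : W (pauli_id n) = (size xs)%:R.
Proof.
rewrite /W pauli_id1 (eq_big_seq (fun _ => 1)) => [|P /orbit_mem_trace trP].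
  by rewrite big_const_seq count_predT iter_addr_0.
by rewrite mulmx1 trP normr1.
Qed.

Lemma sum_orbit_weight : \sum_p W p = (size xs)%:R * char_l1 (proj z).
Proof.
rewrite /W exchange_big /= (eq_big_seq (fun _ => char_l1 (proj z))).
  by rewrite big_const_seq count_predT iter_addr_0 mulr_natl.
move=> P /orbit_mem_char <-; apply: eq_bigr => p _.
by rewrite mxtrace_mulC.
Qed.

Lemma orbit_weight_nonidE p : p != pauli_id n ->
  W p * ((4 ^ n)%:R - 1) = (size xs)%:R * (char_l1 (proj z) - 1).
Proof.
move=> p_nonid; have := sum_orbit_weight; rewrite (bigD1 (pauli_id n)) //= orbit_weight_id.
rewrite (eq_bigr (fun _ => W p)) => [|q q_nonid]; last exact: orbit_weight_nonid.
rewrite sumr_const cardC1 card_ffun !card_ord.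
have -> : (4 ^ n)%:R = ((4 ^ n).-1)%:R + 1 :> C by rewrite natr1 prednK ?expn_gt0.
move: (4 ^ n).-1 => k sumE.
by rewrite addrK mulr_natr; apply: (addrI (size xs)%:R); rewrite sumE; ring.
Qed.

End Orbit.

(** * The trace norm of a Pauli string *)

Section TraceNorm.
Variable C : numClosedFieldType.

Lemma cvnorm_term_ge0 m (w : 'cV[C]_m) k : 0 <= adjmx w 0 k * w k 0.
Proof. by rewrite !mxE mulrC mul_conjC_ge0. Qed.

Lemma cvnorm_ge0 m (w : 'cV[C]_m) : 0 <= (adjmx w *m w) 0 0.
Proof. by rewrite mxE sumr_ge0 // => k _; exact: cvnorm_term_ge0. Qed.

Lemma cvnorm_eq0 m (w : 'cV[C]_m) : (adjmx w *m w) 0 0 = 0 -> w = 0.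
Proof.
rewrite mxE => /psumr_eq0P w0; apply/matrixP => i j; rewrite ord1 mxE.
have := w0 (fun k _ => cvnorm_term_ge0 w k) i isT.
by rewrite !mxE mulrC => /eqP; rewrite mul_conjC_eq0 => /eqP.
Qed.

Lemma psd_sqr_id m (B : 'M[C]_m) : psd B -> B *m B = 1%:M -> B = 1%:M.
Proof.
(* B acts as -1 on the range of B - 1, where positivity leaves only 0. *)
move=> psdB BB; set D := B - 1%:M.
have BD : B *m D = - D by rewrite mulmxBr BB mulmx1 opprB.
have D0 (u : 'cV[C]_m) : D *m u = 0.
  set w := D *m u; have Bw : B *m w = - w by rewrite /w mulmxA BD mulNmx.
  apply: cvnorm_eq0; apply/eqP; rewrite eq_le cvnorm_ge0 andbT.
  by have := psdB w; rewrite -mulmxA Bw mulmxN [X in 0 <= X]mxE oppr_ge0.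
apply/matrixP => i j; have /matrixP/(_ i 0) := D0 (delta_mx j 0).
by rewrite -colE !mxE => /eqP; rewrite subr_eq0 => /eqP.
Qed.

Lemma trace_norm_pauli n (p : {ffun 'I_n -> 'I_4}) t :
  trace_norm_is (pauli p : 'M[C]_(2 ^ n)) t -> t = (2 ^ n)%:R.
Proof.
case=> B [psdB [BB ->]]; rewrite pauli_adj pauli_mulmx_self in BB.
by rewrite (psd_sqr_id psdB BB) mxtrace1.
Qed.

End TraceNorm.

Lemma pauli_nonid_gt0 n (p : {ffun 'I_n -> 'I_4}) : p != pauli_id n -> (0 < n)%N.
Proof. by case: n p => // p /ffun_neqP [[]]. Qed.

Unset Implicit Arguments.
Theorem theorem2 (C : numClosedFieldType) (n : nat) (z : 'cV[C]_(2 ^ n))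
  (xs : seq 'M[C]_(2 ^ n)) (p : {ffun 'I_n -> 'I_4}) (t : C) :
  (adjmx z *m z) 0 0 = 1 ->
  clifford_orbit_enum z xs ->
  p != pauli_id n ->
  trace_norm_is (pauli p) t ->
  povm_l1 xs (pauli p) =
    (char_l1 (proj z) - 1) / (((2 ^ n)%:R + 1) * ((2 ^ n)%:R - 1)) * t.
Proof.
move=> z_unit orbit_xs p_nonid /trace_norm_pauli ->; rewrite povm_l1_pauli.
have := orbit_weight_nonidE orbit_xs z_unit p_nonid.
have -> : (4 ^ n)%:R = (2 ^ n)%:R ^+ 2 :> C by rewrite -natrX -expnM mulnC expnM.
have gt1 : (1 < 2 ^ n)%N by rewrite -{1}(expn0 2) ltn_exp2l // (pauli_nonid_gt0 p_nonid).
have d1 : (2 ^ n)%:R - 1 != 0 :> C by rewrite subr_eq0 pnatr_eq1 gtn_eqF.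
have d2 : (2 ^ n)%:R + 1 != 0 :> C by rewrite natr1 pnatr_eq0.
have N0 := orbit_size_neq0 orbit_xs.
move: (orbit_weight _ _) (2 ^ n)%:R d1 d2 => w d d1 d2 wE.
have d21 : d ^+ 2 - 1 = (d + 1) * (d - 1) by ring.
rewrite d21 in wE; rewrite -[w](mulfK (mulf_neq0 d2 d1)) wE.
by field; rewrite N0 d1 d2.
Qed.
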